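(* Let $G$ be a finite graph with at least one edge, and let $a \ge 1$ be its arboricity. Then $G$ contains a block vertex $v$ with $\deg_G(v) \le 2a-1$.
   Context: A block of a graph is a maximal biconnected component. A vertex is a cut vertex if it lies in two or more blocks; otherwise it is a block vertex. The arboricity of a graph is the minimum number of forests whose union covers all its edges. *)

From mathcomp Require Import all_boot.
Set Implicit Arguments. Unset Strict Implicit. Unset Printing Implicit Defensive.

Section Graphs.
Variable T : finType.

Definition simple_graph (e : rel T) : Prop := symmetric e /\ irreflexive e.

Definition deg (e : rel T) (v : T) : nat := #|[set w | e v w]|.

Definition induced (e : rel T) (B : {set T}) : rel T :=
  [rel x y | [&& e x y, x \in B & y \in B]].

(* G[B] is connected (the empty set counts as connected) *)
Definition connected_on (e : rel T) (B : {set T}) : Prop :=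
  forall x y, x \in B -> y \in B -> connect (induced e B) x y.

(* G[B] is biconnected: at least two vertices, connected, and no cut vertex
   (removing any single vertex leaves it connected); this covers K2. *)
Definition biconnected (e : rel T) (B : {set T}) : Prop :=
  1 < #|B| /\ connected_on e B /\ forall x, x \in B -> connected_on e (B :\ x).

Definition block (e : rel T) (B : {set T}) : Prop :=
  biconnected e B /\ forall B' : {set T}, B \subset B' -> biconnected e B' -> B' = B.

Definition block_vertex (e : rel T) (v : T) : Prop :=
  exists B : {set T}, [/\ block e B, v \in B & forall B' : {set T}, block e B' -> v \in B' -> B' = B].

Definition cut_vertex (e : rel T) (v : T) : Prop :=
  exists B1 B2 : {set T}, [/\ block e B1, block e B2, B1 != B2, v \in B1 & v \in B2].

Definition forest (f : rel T) : Prop :=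
  symmetric f /\ irreflexive f /\
  forall s : seq T, uniq s -> 2 < size s -> ~~ cycle f s.

Definition forest_cover (e : rel T) (k : nat) : Prop :=
  exists F : 'I_k -> rel T,
    [/\ forall i, forest (F i),
        forall i x y, F i x y -> e x y
      & forall x y, e x y -> exists i, F i x y].

Definition arboricity (e : rel T) (a : nat) : Prop :=
  forest_cover e a /\ forall k, forest_cover e k -> a <= k.

End Graphs.

From mathcomp Require Import all_boot zify.
Set Implicit Arguments. Unset Strict Implicit. Unset Printing Implicit Defensive.

(* For a vertex set B, let degsum f B be the sum over v in B
   of the number of f-neighbours of v inside B (twice the number of edges of
   f[B]).  A forest restricted to a nonempty B has a vertex with at most one
   neighbour in B (a maximal path cannot be extended), so peeling such leaves
   gives degsum f B <= 2(|B| - 1); covering e by a forests gives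
   degsum e B <= a * 2(|B| - 1).

   Call B hanging at c if G[B] is connected, |B| >= 2, c is in B,
   and every edge leaving B starts at c.  The component of an edge is hanging;
   if a hanging set B is not biconnected, a cut vertex x of G[B] and a component
   of G[B - x] avoiding c give a strictly smaller hanging set (at x).  Hence
   some hanging set B (at c) is biconnected.  Such a B is a block, every
   v in B - c is a block vertex whose neighbours all lie in B, and c has a
   neighbour in B; averaging degsum e B over B - c gives the vertex sought. *)

Section ForestDegrees.
Variable T : finType.
Implicit Types (f : rel T) (A B : {set T}).

Definition nbr f B v : {set T} := [set w in B | f v w].
Definition degsum f B : nat := \sum_(v in B) #|nbr f B v|.

Lemma card_nbr f B v : #|nbr f B v| = \sum_(w in B) f v w.
Proof.
rewrite -sum1dep_card big_mkcondr /=; apply: eq_bigr => w _.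
by case: (f v w).
Qed.

Lemma other_elem A u : 1 < #|A| -> exists2 z, z \in A & z != u.
Proof.
case/card_gt1P => x [y [xA yA xy]].
case: (eqVneq x u) => [xu|]; last by exists x.
by exists y; rewrite // -xu eq_sym.
Qed.

(* Deleting v from B loses exactly the edges at v, each counted twice. *)
Lemma degsum_remove f B v : symmetric f -> irreflexive f -> v \in B ->
  degsum f B = degsum f (B :\ v) + 2 * #|nbr f B v|.
Proof.
move=> fsym firr vB.
have row u : u \in B :\ v -> #|nbr f B u| = #|nbr f (B :\ v) u| + f u v.
  by move=> _; rewrite !card_nbr (big_setD1 v vB) addnC.
have col : \sum_(u in B :\ v) (f u v : nat) = #|nbr f B v|.
  by rewrite card_nbr (big_setD1 v vB) /= firr; apply: eq_bigr => u _; rewrite fsym.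
rewrite /degsum (big_setD1 v vB) /= (eq_bigr _ row) big_split /= col; lia.
Qed.

(* A simple f-path y :: t in a forest can be extended at y, within B, as long
   as y has two neighbours in B: the neighbour other than the next vertex of
   the path cannot lie on it, since that would close a cycle. *)
Lemma forest_extend_path f B y t : forest f -> y \in B -> 1 < #|nbr f B y| ->
  uniq (y :: t) -> path f y t -> exists z, [/\ z \in B, z \notin y :: t & f z y].
Proof.
move=> [fsym [firr facyc]] yB degy un pth.
have [z] := other_elem (head y t) degy; rewrite inE => /andP [zB fyz] z_next.
exists z; split => //; last by rewrite fsym.
apply/negP => z_on.
have zy : z != y by apply: contraTneq fyz => ->; rewrite firr.
move: z_on; rewrite inE (negbTE zy) /= => zt.
move: z_next pth un; case/splitPr: zt => t1 t2.
case: t1 => [|x1 t1] /=; first by rewrite eqxx.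
move=> _ /andP [fyx1]; rewrite cat_path /= => /and3P [p1 fz _] un.
have sub : subseq (y :: x1 :: rcons t1 z) (y :: x1 :: t1 ++ z :: t2).
  rewrite -cats1 -!cat_cons; apply: cat_subseq; first exact: subseq_refl.
  by rewrite sub1seq mem_head.
apply: (negP (facyc _ (subseq_uniq sub un) _)).
  by rewrite /= size_rcons.
by rewrite /= rcons_path fyx1 rcons_path p1 last_rcons fz fsym.
Qed.

(* Every nonempty vertex set contains a leaf (or isolated vertex) of the
   restricted forest; otherwise simple paths of every length would exist. *)
Lemma forest_leaf f B x : forest f -> x \in B -> exists2 v, v \in B & #|nbr f B v| <= 1.
Proof.
move=> fF xB.
case: (pickP [pred v in B | #|nbr f B v| <= 1]) => [v /andP [vB leaf] | none].
  by exists v.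
have deg2 v : v \in B -> 1 < #|nbr f B v|.
  by move=> vB; rewrite ltnNge; apply/negP => leaf; have := none v; rewrite /= vB leaf.
have long n : exists y t,
    [/\ y \in B, {subset t <= B}, uniq (y :: t), path f y t & size t = n].
  elim: n => [|n [y [t [yB tB un pth sz]]]]; first by exists x, [::].
  have [z [zB zt fzy]] := forest_extend_path fF yB (deg2 y yB) un pth.
  exists z, (y :: t); split => //=; [|by rewrite zt|by rewrite fzy|by rewrite sz].
  by move=> w; rewrite inE => /predU1P [->|/tB].
have [y [t [yB tB un _ sz]]] := long #|B|.
have : #|y :: t| <= #|B|.
  by apply/subset_leq_card/subsetP => w; rewrite inE => /predU1P [->|/tB].
by rewrite (card_uniqP un) /= sz ltnn.
Qed.

Lemma forest_degsum f B : forest f -> degsum f B <= 2 * (#|B| - 1).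
Proof.
move=> fF; have [fsym [firr _]] := fF.
move Hn: #|B| => n; elim: n B Hn => [|n IH] B cardB.
  by move/eqP: cardB; rewrite cards_eq0 => /eqP ->; rewrite /degsum big_set0.
have [x xB] : exists x, x \in B by apply/card_gt0P; rewrite cardB.
have [v vB leaf] := forest_leaf fF xB.
have cardBv : #|B :\ v| = n by move: cardB; rewrite (cardsD1 v) vB => -[].
have nbr_le : #|nbr f B v| <= n.
  rewrite -cardBv; apply/subset_leq_card/subsetP => w; rewrite !inE => /andP [wB fvw].
  by rewrite wB andbT; apply: contraTneq fvw => ->; rewrite firr.
rewrite (degsum_remove fsym firr vB); have := IH _ cardBv; lia.
Qed.

Lemma cover_degsum e k B : forest_cover e k -> degsum e B <= k * (2 * (#|B| - 1)).
Proof.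
case=> F [Fforest _ Fcover].
have edge_le u w : (e u w : nat) <= \sum_(i < k) F i u w.
  case euw: (e u w) => //; have [i Fi] := Fcover u w euw.
  by rewrite (bigD1 i) //= Fi.
apply: (@leq_trans (\sum_(i < k) degsum (F i) B)).
  rewrite /degsum exchange_big /=; apply: leq_sum => u _.
  rewrite card_nbr (eq_bigr _ (fun i _ => card_nbr (F i) B u)) exchange_big /=.
  by apply: leq_sum => w _.
rewrite -[k in k * _]card_ord -sum_nat_const; apply: leq_sum => i _.
exact: forest_degsum.
Qed.

End ForestDegrees.

Section HangingSets.
Variable T : finType.
Variable e : rel T.
Hypothesis e_sym : symmetric e.
Implicit Types (A B S : {set T}).

Lemma connect_exit (R : rel T) A x y : connect R x y -> x \in A -> y \notin A ->
  exists u w, [/\ u \in A, w \notin A & R u w].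
Proof.
move=> /connectP [p pth ->]; elim: p x pth => [|z p IH] x /= pth xA yA.
  by rewrite xA in yA.
case/andP: pth => Rxz pth; case zA: (z \in A); first exact: IH pth zA yA.
by exists x, z; rewrite zA.
Qed.

Lemma induced_sym S : symmetric (induced e S).
Proof.
move=> u w; rewrite /induced /= e_sym.
by case: (u \in S); case: (w \in S); rewrite ?andbF.
Qed.

Lemma induced_connect_in S x y : connect (induced e S) x y -> x \in S -> y \in S.
Proof.
move=> cxy xS; apply/negPn/negP => yS.
by have [u [w [_ wS /and3P [_ _ wS']]]] := connect_exit cxy xS yS; rewrite wS' in wS.
Qed.

Lemma connect_induced (R : rel T) S r w : subrel R e ->
  (forall z, connect R r z -> z \in S) -> connect R r w -> connect (induced e S) r w.
Proof.
move=> Re inS /connectP [p pth ->]; elim: p r inS pth => [|z p IH] r inS /=.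
  by rewrite connect0.
case/andP => Rrz pth.
have inS' y : connect R z y -> y \in S.
  by move=> zy; apply: inS; apply: connect_trans (connect1 Rrz) zy.
have rz : connect (induced e S) r z.
  by apply: connect1; rewrite /induced /= (Re _ _ Rrz) inS ?connect0 // inS' ?connect0.
exact: connect_trans rz (IH z inS' pth).
Qed.

Lemma connected_from S x : (forall w, w \in S -> connect (induced e S) x w) ->
  connected_on e S.
Proof.
move=> xconn u w uS wS; apply: connect_trans _ (xconn w wS).
by rewrite (sym_connect_sym (induced_sym S)) xconn.
Qed.

Definition attached_only_at B c : Prop :=
  forall u w, u \in B -> w \notin B -> e u w -> u = c.

Definition hanging B c : Prop :=
  [/\ 1 < #|B|, connected_on e B, c \in B & attached_only_at B c].

(* A biconnected set meeting B - c stays inside B: leaving B would need a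
   path through c, and removing c keeps it connected. *)
Lemma biconnected_within S B c x : c \in B -> attached_only_at B c -> biconnected e S ->
  x \in S -> x \in B -> x != c -> S \subset B.
Proof.
move=> cB att [_ [Sconn Scut]] xS xB xc; apply/subsetP => y yS; apply/negPn/negP => yB.
have through_c S' : connect (induced e S') x y -> c \in S'.
  move=> cxy; have [u [w [uB wB /and3P [euw uS' _]]]] := connect_exit cxy xB yB.
  by rewrite -(att u w uB wB euw).
case cS: (c \in S); last by move: (through_c S (Sconn x y xS yS)); rewrite cS.
have yc : y != c by apply: contraNneq yB => ->.
have xSc : x \in S :\ c by rewrite !inE xc xS.
have ySc : y \in S :\ c by rewrite !inE yc yS.
by have := through_c _ (Scut c cS x y xSc ySc); rewrite !inE eqxx.
Qed.

Lemma component_hanging B c x r : hanging B c -> x \in B -> r \in B :\ x ->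
  c \notin [set w | connect (induced e (B :\ x)) r w] ->
  hanging (x |: [set w | connect (induced e (B :\ x)) r w]) x.
Proof.
move=> [_ Bconn cB att] xB rBx; set C := [set w | _] => cC.
have CBx w : w \in C -> w \in B :\ x by rewrite inE => /induced_connect_in; apply.
have rC : r \in C by rewrite inE connect0.
have xC : x \notin C by apply/negP => /CBx; rewrite !inE eqxx.
have rB : r \in B by case/setD1P: rBx.
have closedC u w : u \in C -> w \in B :\ x -> e u w -> w \in C.
  move=> uC wBx euw; have uBx := CBx u uC; move: uC; rewrite !inE => ru.
  by apply: connect_trans ru (connect1 _); rewrite /induced /= euw uBx wBx.
have r_to_C w : w \in C -> connect (induced e (x |: C)) r w.
  rewrite inE; apply: connect_induced => [u v /and3P [] //|z rz].
  by rewrite in_setU1 inE rz orbT.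
have x_to_r : connect (induced e (x |: C)) x r.
  have [u [w [uC wC /and3P [euw _ wB]]]] := connect_exit (Bconn r x rB xB) rC xC.
  have wx : w = x.
    by apply: contraNeq wC => wx; apply: closedC uC _ euw; rewrite !inE wx wB.
  subst w; have xu : induced e (x |: C) x u.
    by rewrite /induced /= e_sym euw !in_setU1 eqxx uC orbT.
  apply: connect_trans (connect1 xu) _.
  by rewrite (sym_connect_sym (induced_sym _)) r_to_C.
split.
- apply/card_gt1P; exists x, r; rewrite !in_setU1 eqxx rC orbT; split => //.
  by apply: contraNneq xC => ->.
- apply: (connected_from (x := x)) => w; rewrite in_setU1 => /predU1P [->|wC].
    exact: connect0.
  exact: connect_trans x_to_r (r_to_C w wC).
- by rewrite in_setU1 eqxx.
- move=> u w; rewrite !in_setU1 => /predU1P [//|uC]; rewrite negb_or => /andP [wx wC] euw.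
  case wB: (w \in B); first by rewrite (closedC u w) // !inE wx wB in wC.
  have uB : u \in B by case/setD1P: (CBx u uC).
  by move: uC; rewrite (att u w uB _ euw) ?wB // (negbTE cC).
Qed.

(* A cut vertex x of G[B] for a hanging B yields a smaller hanging set:
   of the components of y and z in G[B - x], at least one avoids c. *)
Lemma hanging_cut B c x y z : hanging B c -> x \in B -> y \in B :\ x -> z \in B :\ x ->
  ~~ connect (induced e (B :\ x)) y z -> exists B' c', hanging B' c' /\ #|B'| < #|B|.
Proof.
move=> hB xB yBx zBx nyz; set R := induced e (B :\ x).
have Rsym : connect_sym R := sym_connect_sym (induced_sym _).
suff smaller r r' : r \in B :\ x -> r' \in B :\ x -> ~~ connect R r r' ->
    c \notin [set w | connect R r w] -> exists B' c', hanging B' c' /\ #|B'| < #|B|.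
  case yc: (connect R y c); last by apply: (smaller y z); rewrite // inE yc.
  apply: (smaller z y) => //; first by rewrite Rsym.
  rewrite inE; apply: contra nyz => zc.
  by rewrite (connect_trans yc) // Rsym.
move=> rBx r'Bx nrr' cC; exists (x |: [set w | connect R r w]), x.
split; first exact: (component_hanging hB xB rBx cC).
apply/proper_card/properP; split.
  apply/subsetP => w; rewrite in_setU1 => /predU1P [-> //|].
  by rewrite inE => /induced_connect_in /(_ rBx) /setD1P [].
have [r'x r'B] := setD1P r'Bx.
by exists r' => //; rewrite in_setU1 inE negb_or r'x.
Qed.

Lemma component_hanging_init x y : irreflexive e -> e x y ->
  hanging [set w | connect e x w] x.
Proof.
move=> eirr exy; set C := [set w | _].
have x_to_C w : w \in C -> connect (induced e C) x w.
  by rewrite inE; apply: connect_induced => // z xz; rewrite inE.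
split.
- apply/card_gt1P; exists x, y; rewrite !inE connect0 connect1 //; split => //.
  by apply: contraTneq exy => ->; rewrite eirr.
- exact: connected_from x_to_C.
- by rewrite inE connect0.
- move=> u w; rewrite !inE => xu /negP xw euw; case: xw.
  exact: connect_trans xu (connect1 euw).
Qed.

(* Shrinking hanging sets at cut vertices ends at a biconnected one. *)
Lemma exists_biconnected_hanging x y : irreflexive e -> e x y ->
  exists B c, hanging B c /\ biconnected e B.
Proof.
move=> eirr exy.
suff: forall n B c, #|B| < n -> hanging B c -> exists B c, hanging B c /\ biconnected e B.
  by apply; [apply: ltnSn | apply: component_hanging_init eirr exy].
elim=> // n IH B c ltBn hB; have [B2 Bconn _ _] := hB.
have [cutfree|] := boolP [forall v in B, forall y in B :\ v, forall z in B :\ v,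
                            connect (induced e (B :\ v)) y z].
  exists B, c; split => //; split => //; split => // v vB u w uBv wBv.
  by move/forall_inP/(_ v vB)/forall_inP/(_ u uBv)/forall_inP/(_ w wBv): cutfree.
case/forall_inPn => v vB /forall_inPn [u uBv /forall_inPn [w wBv nuw]].
have [B' [c' [hB' ltB']]] := hanging_cut hB vB uBv wBv nuw.
exact: IH B' c' (leq_trans ltB' ltBn) hB'.
Qed.

Lemma hanging_block B c : hanging B c -> biconnected e B -> block e B.
Proof.
move=> [B2 _ cB att] bicB; split => // B' BB' bicB'.
have [x xB xc] := other_elem c B2.
apply/eqP; rewrite eqEsubset BB' andbT.
exact: biconnected_within cB att bicB' (subsetP BB' x xB) xB xc.
Qed.

Lemma hanging_block_vertex B c v : hanging B c -> biconnected e B ->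
  v \in B -> v != c -> block_vertex e v.
Proof.
move=> hB bicB vB vc; have [_ _ cB att] := hB.
exists B; split => //; first exact: (hanging_block hB bicB).
move=> B' [bicB' maxB'] vB'; symmetry; apply: maxB' => //.
exact: biconnected_within cB att bicB' vB' vB vc.
Qed.

Lemma hanging_deg B c v : attached_only_at B c -> v \in B -> v != c ->
  deg e v = #|nbr e B v|.
Proof.
move=> att vB vc; apply: eq_card => w; rewrite !inE.
case evw: (e v w); rewrite ?andbT ?andbF //.
by apply/esym/negPn/negP => wB; move: vc; rewrite (att v w vB wB evw) eqxx.
Qed.

Lemma hanging_nbr_attach B c : hanging B c -> 0 < #|nbr e B c|.
Proof.
move=> [B2 Bconn cB _]; have [x xB xc] := other_elem c B2.
have x_out : x \notin [set c] by rewrite inE.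
have [u [w [/set1P -> wc /and3P [euw _ wB]]]] :=
  connect_exit (Bconn c x cB xB) (set11 c) x_out.
by apply/card_gt0P; exists w; rewrite inE wB euw.
Qed.

End HangingSets.

Lemma average_below (T : finType) (d : T -> nat) (B : {set T}) c m :
  c \in B -> 0 < d c -> \sum_(v in B) d v <= m * (#|B| - 1) ->
  exists v, [/\ v \in B, v != c & d v < m].
Proof.
move=> cB dc sum_le.
case: (pickP [pred v in B :\ c | d v < m]) => [v /andP [/setD1P [vc vB] dv] | none].
  by exists v.
have card_c : #|B :\ c| = #|B| - 1 by rewrite [#|B|](cardsD1 c) cB; lia.
have lower : m * #|B :\ c| <= \sum_(v in B :\ c) d v.
  rewrite mulnC -sum_nat_const; apply: leq_sum => v vBc.
  by rewrite leqNgt; apply/negP => dv; have := none v; rewrite /= vBc dv.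
by move: sum_le; rewrite (big_setD1 c cB) /= -card_c; lia.
Qed.

Theorem mainTheorem1 (T : finType) (e : rel T) (a : nat) :
  simple_graph e ->
  (exists x y, e x y) ->
  arboricity e a ->
  1 <= a ->
  exists v, block_vertex e v /\ deg e v <= 2 * a - 1.
Proof.
move=> [e_sym e_irr] [x [y exy]] [cover _] _.
have [B [c [hB bicB]]] := exists_biconnected_hanging e_sym e_irr exy.
have [_ _ cB att] := hB.
have [v [vB vc dv]] : exists v, [/\ v \in B, v != c & #|nbr e B v| < 2 * a].
  apply: (average_below cB (hanging_nbr_attach hB)).
  by have := cover_degsum B cover; rewrite /degsum; lia.
exists v; split; first exact: hanging_block_vertex hB bicB vB vc.
by rewrite (hanging_deg att vB vc); lia.
Qed.
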